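(* Let $f_1 \in \mathcal{F}_{\mu_1,L_1}(\mathbb{R}^d)$ and $f_2 \in \mathcal{F}_{\mu_2,L_2}(\mathbb{R}^d)$ with $\mu_1 \in [0,\infty)$, $L_1 \in (\mu_1,\infty]$, $\mu_2 \in \mathbb{R}$, $L_2 \in (\mu_2,\infty]$, such that $F = f_1 - f_2$ is bounded below with $F_{lo} := \inf F$, $\emptyset \ne \operatorname{dom}\partial f_1 \subseteq \operatorname{dom}\partial f_2$ and $\operatorname{range}\partial f_2 \subseteq \operatorname{range}\partial f_1$. Assume $L_1 < \infty$ or $L_2 < \infty$, and $\mu_1+\mu_2>0$ or $\mu_1=\mu_2=0$. Run $N \ge 1$ DCA iterations from $x^0 \in \operatorname{dom}\partial f_1$: for $k = 0,\dots,N-1$ select $g_2^k \in \partial f_2(x^k)$ and $x^{k+1} \in \operatorname{argmin}_w \{f_1(w) - \langle g_2^k, w\rangle\}$, and set $g_1^{k+1} := g_2^k \in \partial f_1(x^{k+1})$; let $g_1^0 \in \partial f_1(x^0)$ and $g_2^N \in \partial f_2(x^N)$ be arbitrary. Suppose the parameters lie in the domain $D_i$ of one of the six regimes below and let $p_i := \sigma_i + \sigma_i^+$. Then $$\tfrac12 \min_{0\le k\le N} \|g_1^k - g_2^k\|^2 \le \frac{F(x^0) - F(x^N)}{p_i N}.$$ If in addition $L_1 > \mu_2$, then $$\tfrac12 \min_{0\le k\le N} \|g_1^k - g_2^k\|^2 \le \frac{F(x^0) - F_{lo}}{p_i N + \frac{1}{L_1 - \mu_2}}.$$ Regimes (with $B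 := \mu_1^{-1}+\mu_2^{-1}+L_2^{-1}$, $E := \frac{L_2+\mu_2}{L_1L_2}\cdot\frac{L_2-L_1}{-\mu_2} + \mu_1^{-1} - L_1^{-1}$): (1) $\sigma_1 = L_2^{-1}\frac{L_2-\mu_1}{L_1-\mu_1}$, $\sigma_1^+ = L_2^{-1}\big(1 + \frac{L_2^{-1}-L_1^{-1}}{\mu_1^{-1}-L_1^{-1}}\big)$; $D_1$: $L_1\ge L_2\ge\mu_1\ge0$, $L_1>\mu_2$, and $\mu_2 \ge 0$ or ($\mu_2<0$ and $E\le0$). (2) $\sigma_2 = L_1^{-1}\big(1+\frac{L_1^{-1}-L_2^{-1}}{\mu_2^{-1}-L_2^{-1}}\big)$, $\sigma_2^+ = L_1^{-1}\frac{L_1-\mu_2}{L_2-\mu_2}$; $D_2$: $L_2\ge L_1\ge\mu_2\ge0$, $L_2>\mu_1$, $\mu_1\ge0$. (3) $\sigma_3 = \frac{L_1^{-1}B}{B-L_1^{-1}}$, $\sigma_3^+ = \frac{1}{L_2+\mu_2}$; $D_3$: $\mu_2<0$, $\mu_1>0$, $L_2>\mu_1$, $L_1>\mu_2$, $B\le0$, and ($L_1\ge L_2$ and $E\ge0$) or $L_2>L_1$. (4) $\sigma_4=0$, $\sigma_4^+ = \frac{\mu_1+\mu_2}{\mu_2^2}$; $D_4$: $\mu_2<0$, $\mu_1>0$, $L_1>\mu_2$, and ($B>0$, $L_2>\mu_1$) or ($B>0$, $0<L_2\le\mu_1$) or ($B\le0$, $L_2\le0$). (5) $\sigma_5=0$,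 $\sigma_5^+ = \frac{L_2+\mu_1}{L_2^2}$; $D_5$: $L_1>\mu_1\ge L_2>0$, $L_1>\mu_2$, and $\mu_2\ge0$ or ($\mu_2<0$ and $B\le0$). (6) $\sigma_6 = \frac{L_1+\mu_2}{L_1^2}$, $\sigma_6^+=0$; $D_6$: $L_2>\mu_2\ge L_1>\mu_1\ge0$.
   Context: For $\mu\in\mathbb{R}$ and $L\in(\mu,\infty]$, $\mathcal{F}_{\mu,L}(\mathbb{R}^d)$ is the class of proper lower semicontinuous $f:\mathbb{R}^d\to\mathbb{R}$ with $f-\frac{\mu}{2}\|\cdot\|^2$ convex and, if $L<\infty$, $\frac{L}{2}\|\cdot\|^2-f$ convex ($L$ may be nonpositive). Subdifferential: $\partial f(x) = \{g+\mu x : g\in\partial(f-\frac{\mu}{2}\|\cdot\|^2)(x)\}$ (convex subdifferential), equal to $\{\nabla f(x)\}$ where $f$ is differentiable. $\operatorname{dom}\partial f=\{x:\partial f(x)\ne\emptyset\}$, $\operatorname{range}\partial f=\bigcup_x\partial f(x)$. Conventions: $1/\infty=0$ and expressions with an infinite parameter are understood as limits. *)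

(* R : realType, vectors in R^d are row vectors 'rV[R]_d,
   extended parameters L in (mu, +oo] are extended reals \bar R. *)
From HB Require Import structures.
From mathcomp Require Import all_boot all_order all_algebra.
From mathcomp Require Import reals constructive_ereal.
Set Implicit Arguments. Unset Strict Implicit. Unset Printing Implicit Defensive.
Import Order.TTheory GRing.Theory Num.Theory.
Local Open Scope ring_scope.

Section Defs.
Variables (R : realType) (d : nat).
Local Notation vec := 'rV[R]_d.

Definition dotv (u v : vec) : R := \sum_(i < d) u ord0 i * v ord0 i.
Definition sqn (u : vec) : R := dotv u u.

Definition convexf (h : vec -> R) : Prop :=
  forall (x y : vec) (t : R), 0 <= t -> t <= 1 ->
    h (t *: x + (1 - t) *: y) <= t * h x + (1 - t) * h y.

Definition lscf (f : vec -> R) : Prop :=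
  forall (x : vec) (e : R), 0 < e ->
    exists2 r : R, 0 < r & forall y : vec, sqn (y - x) < r -> f x - e < f y.

(* the class F_{mu,L}(R^d); L = +oo means no upper curvature condition *)
Definition inFclass (mu : R) (L : \bar R) (f : vec -> R) : Prop :=
  [/\ lscf f,
      convexf (fun x => f x - mu / 2 * sqn x)
    & forall l : R, L = l%:E -> convexf (fun x => l / 2 * sqn x - f x)].

(* subdifferential of f in F_{mu,L}:
   g \in \partial f(x)  iff  g - mu x is a convex subgradient of
   f - mu/2 ||.||^2 at x *)
Definition subdiff (mu : R) (f : vec -> R) (x g : vec) : Prop :=
  forall y : vec,
    (f x - mu / 2 * sqn x) + dotv (g - mu *: x) (y - x) <= f y - mu / 2 * sqn y.

Definition min_upto (N : nat) (h : nat -> R) : R :=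
  \big[Order.min/h 0%N]_(k < N.+1) h k.

(* 1/L with the convention 1/+oo = 0 (and MathComp's 0^-1 = 0) *)
Definition invE (x : \bar R) : R :=
  match x with EFin r => r^-1 | _ => 0 end.

Definition Bval (m1 m2 : R) (L2 : \bar R) : R := m1^-1 + m2^-1 + invE L2.

(* E = (L2+mu2)/(L1 L2) * (L2-L1)/(-mu2) + mu1^-1 - L1^-1, with infinite
   parameters understood as limits (value in \bar R since the limit
   L2 -> +oo diverges). *)
Definition Eval (m1 m2 : R) (L1 L2 : \bar R) : \bar R :=
  match L1, L2 with
  | EFin l1, EFin l2 =>
      ((l2 + m2) / (l1 * l2) * ((l2 - l1) / (- m2)) + m1^-1 - l1^-1)%:E
  | EFin _, _ => if m2 < 0 then +oo%E else -oo%E   (* limit L2 -> +oo *)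
  | _, EFin l2 => ((l2 + m2) / (l2 * m2) + m1^-1)%:E (* limit L1 -> +oo *)
  | _, _ => +oo%E                                   (* excluded case *)
  end.

Definition sig1 (m1 : R) (L1 L2 : \bar R) : R :=
  match L1, L2 with
  | EFin l1, EFin l2 => l2^-1 * (l2 - m1) / (l1 - m1)
  | EFin l1, _ => (l1 - m1)^-1                      (* limit L2 -> +oo *)
  | _, _ => 0                                       (* limit L1 -> +oo *)
  end.
Definition sig1p (m1 : R) (L1 L2 : \bar R) : R :=
  invE L2 * (1 + (if m1 == 0 then 0   (* mu1 = 0 : mu1^-1 = +oo *)
                  else (invE L2 - invE L1) / (m1^-1 - invE L1))).
Definition sig2 (m2 : R) (L1 L2 : \bar R) : R :=
  invE L1 * (1 + (if m2 == 0 then 0   (* mu2 = 0 : mu2^-1 = +oo *)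
                  else (invE L1 - invE L2) / (m2^-1 - invE L2))).
Definition sig2p (m2 : R) (L1 L2 : \bar R) : R :=
  match L1, L2 with
  | EFin l1, EFin l2 => l1^-1 * (l1 - m2) / (l2 - m2)
  | EFin _, _ => 0                                  (* limit L2 -> +oo *)
  | _, EFin l2 => (l2 - m2)^-1                      (* limit L1 -> +oo *)
  | _, _ => 0
  end.
Definition sig3 (m1 m2 : R) (L1 L2 : \bar R) : R :=
  invE L1 * Bval m1 m2 L2 / (Bval m1 m2 L2 - invE L1).
Definition sig3p (m2 : R) (L2 : \bar R) : R := invE (L2 + m2%:E)%E.
Definition sig4 : R := 0.
Definition sig4p (m1 m2 : R) : R := (m1 + m2) / m2 ^+ 2.
Definition sig5 : R := 0.
Definition sig5p (m1 : R) (L2 : \bar R) : R :=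
  match L2 with EFin l2 => (l2 + m1) / l2 ^+ 2 | _ => 0 end.
Definition sig6 (m2 : R) (L1 : \bar R) : R :=
  match L1 with EFin l1 => (l1 + m2) / l1 ^+ 2 | _ => 0 end.
Definition sig6p : R := 0.

Definition p_reg (i : nat) (m1 m2 : R) (L1 L2 : \bar R) : R :=
  match i with
  | 1%N => sig1 m1 L1 L2 + sig1p m1 L1 L2
  | 2%N => sig2 m2 L1 L2 + sig2p m2 L1 L2
  | 3%N => sig3 m1 m2 L1 L2 + sig3p m2 L2
  | 4%N => sig4 + sig4p m1 m2
  | 5%N => sig5 + sig5p m1 L2
  | 6%N => sig6 m2 L1 + sig6p
  | _ => 0
  end.

Definition D_reg (i : nat) (m1 m2 : R) (L1 L2 : \bar R) : Prop :=
  let B := Bval m1 m2 L2 in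
  let E := Eval m1 m2 L1 L2 in
  match i with
  | 1%N => [/\ (L2 <= L1)%E, (m1%:E <= L2)%E, 0 <= m1, (m2%:E < L1)%E
           & 0 <= m2 \/ (m2 < 0 /\ (E <= 0)%E)]
  | 2%N => [/\ (L1 <= L2)%E, (m2%:E <= L1)%E, 0 <= m2, (m1%:E < L2)%E & 0 <= m1]
  | 3%N => [/\ m2 < 0 /\ 0 < m1, (m1%:E < L2)%E, (m2%:E < L1)%E, B <= 0
           & ((L2 <= L1)%E /\ (0 <= E)%E) \/ (L1 < L2)%E]
  | 4%N => [/\ m2 < 0, 0 < m1, (m2%:E < L1)%E
           & [\/ 0 < B /\ (m1%:E < L2)%E,
                 [/\ 0 < B, (0 < L2)%E & (L2 <= m1%:E)%E]
               | B <= 0 /\ (L2 <= 0)%E]]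
  | 5%N => [/\ (m1%:E < L1)%E, (L2 <= m1%:E)%E, (0 < L2)%E, (m2%:E < L1)%E
           & 0 <= m2 \/ (m2 < 0 /\ B <= 0)]
  | 6%N => [/\ (m2%:E < L2)%E, (L1 <= m2%:E)%E, (m1%:E < L1)%E & 0 <= m1]
  | _ => False
  end.

End Defs.

(* Each DCA step is analysed as a small performance-estimation problem.  For f in
   F_{mu,L} and subgradient pairs (x, g), (y, h) the interpolation inequality

     f y >= f x + <g, y - x> + mu/2 |y - x|^2 + |h - g - mu (y - x)|^2 / (2 (L - mu))

   follows from the descent lemma for f at y and the strong-convexity bound at x.
   Adding (1 + a) and a times the two such inequalities for f1 between x^k and x^(k+1),
   and (1 + b) and b times those for f2, bounds F(x^k) - F(x^(k+1)) from below by a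
   quadratic form in x^k - x^(k+1), g1^k - g2^k and g2^k - g2^(k+1).  Coordinatewise it
   splits into an f1-part and an f2-part that share only the square of the first
   variable, and in each regime explicit weights and a sum of squares for each part
   show that it dominates sigma/2 |g1^k - g2^k|^2 + sigma^+/2 |g1^(k+1) - g2^(k+1)|^2.
   Summing over k gives the first bound.  For the second, the descent lemma for f1 and
   the lower bound for f2 at x^N give |g1^N - g2^N|^2 / (2 (L1 - mu2)) <= F(x^N) - F_lo. *)

From HB Require Import structures.
From mathcomp Require Import all_boot all_order all_algebra.
From mathcomp Require Import reals constructive_ereal.
From mathcomp Require Import ring lra.
Import Order.TTheory GRing.Theory Num.Theory.
Local Open Scope ring_scope.
Set Implicit Arguments. Unset Strict Implicit.

Ltac coordinatewise := rewrite /sqn /dotv;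
  repeat first [ rewrite mulr_sumr | rewrite mulr_suml | rewrite -sumrN
               | rewrite -sumrB | rewrite -big_split ];
  apply: eq_bigr => i _; rewrite ?mxE /=.

Ltac field_ne0 := field; repeat (apply/andP; split); try assumption.

Lemma ge0_of_small_defect (R : realFieldType) (A K : R) :
  0 <= K -> (forall t, 0 < t -> t <= 1 -> - (t * K) <= A) -> 0 <= A.
Proof.
move=> K0 hA; rewrite leNgt; apply/negP => A0.
have KA : 0 < K - A by lra.
set t := - A / (K - A).
have tKA : t * (K - A) = - A by rewrite /t mulfVK // gt_eqF.
have t0 : 0 < t by rewrite /t divr_gt0 // oppr_gt0.
have t1 : t <= 1 by rewrite /t ler_pdivrMr // mul1r; lra.
have := hA t t0 t1; nra.
Qed.

Lemma addrKl (V : zmodType) (x y : V) : x + y - x = y.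
Proof. by rewrite addrC addKr. Qed.

Section QuadraticCertificates.
Variable R : realFieldType.

(* One coordinate of (1 + a) times the interpolation inequality from x' to x plus
   a times the one from x to x', linear terms removed: t and u stand for x - x' and
   g - g', and al for 1 / (L - m). *)
Definition interp_quad (m al a t u : R) : R :=
  (1 + 2 * a) * (m / 2 * t ^+ 2 + al / 2 * (u - m * t) ^+ 2) - a * u * t.

(* [e] is the part of the coefficient of t^2 received from the other half of the
   step's quadratic form (handed to it when negative). *)
Definition half_bound (m al a s e : R) : Prop :=
  forall t u : R, s / 2 * u ^+ 2 - e / 2 * t ^+ 2 <= interp_quad m al a t u.

Definition certified_rate (m1 m2 al1 al2 p : R) : Prop :=
  exists s sp a b e : R,
    [/\ p = s + sp, 0 < p, 0 <= s /\ 0 <= sp, 0 <= a /\ 0 <= b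
      & half_bound m1 al1 a s e /\ half_bound m2 al2 b sp (- e)].

Lemma half_bound_sos (m al a s e w : R) :
  0 <= (1 + 2 * a) * al - s ->
  a + (1 + 2 * a) * m * al = ((1 + 2 * a) * al - s) * w ->
  ((1 + 2 * a) * al - s) * w ^+ 2 = (1 + 2 * a) * m * (1 + m * al) + e ->
  half_bound m al a s e.
Proof.
set r := _ - s; set C := _ * (1 + _) => r0 hk hC t u.
have -> : interp_quad m al a t u
    = s / 2 * u ^+ 2 - e / 2 * t ^+ 2
      + ((C + e) * t ^+ 2 - 2 * (a + (1 + 2 * a) * m * al) * t * u + r * u ^+ 2) / 2.
  by rewrite /interp_quad /C /r; field.
rewrite hk -hC lerDl (_ : _ + _ = r * (u - w * t) ^+ 2); last by ring.
by rewrite divr_ge0 // mulr_ge0 ?sqr_ge0.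
Qed.

Lemma half_bound_le (m al al' a s e e' : R) :
  0 <= a -> al <= al' -> e <= e' -> half_bound m al a s e -> half_bound m al' a s e'.
Proof.
move=> a0 hal he hb t u; have := hb t u; rewrite /interp_quad.
have ht : e / 2 * t ^+ 2 <= e' / 2 * t ^+ 2 by apply: ler_wpM2r; [exact: sqr_ge0 | lra].
have hu : al / 2 * (u - m * t) ^+ 2 <= al' / 2 * (u - m * t) ^+ 2.
  by apply: ler_wpM2r; [exact: sqr_ge0 | lra].
have := ler_wpM2l (_ : 0 <= 1 + 2 * a) hu; lra.
Qed.

Lemma half_bound_rate0 (m al : R) : 0 <= al -> half_bound m al 0 0 (- m).
Proof. by move=> al0; apply: (@half_bound_sos _ _ _ _ _ m); [lra | ring | ring]. Qed.

Lemma half_bound_weight0 (m l l' : R) :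
  0 <= m -> 0 < l' -> m < l ->
  half_bound m (l - m)^-1 0 (l'^-1 * (l' - m) / (l - m)) (- (m * (l - l') / (l - m))).
Proof.
move=> m0 l'0 ml; have lm : l - m != 0 by rewrite subr_eq0 gt_eqF.
have l'n : l' != 0 by rewrite gt_eqF.
apply: (@half_bound_sos _ _ _ _ _ l'); rewrite ?mulr0 ?addr0 ?mul1r.
- have -> : (l - m)^-1 - l'^-1 * (l' - m) / (l - m) = m / (l' * (l - m)) by field_ne0.
  by apply: divr_ge0 => //; apply: mulr_ge0; lra.
- by field_ne0.
- by field_ne0.
Qed.

Lemma half_bound_weighted (m l c : R) :
  0 < l -> m < l -> 0 <= c * (l + m) + m ->
  half_bound m (l - m)^-1 c (l^-1 * (1 + c)) (c * l).
Proof.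
move=> l0 ml hc; have lm : l - m != 0 by rewrite subr_eq0 gt_eqF.
have ln : l != 0 by rewrite gt_eqF.
apply: (@half_bound_sos _ _ _ _ _ l).
- have -> : (1 + 2 * c) * (l - m)^-1 - l^-1 * (1 + c) = (c * (l + m) + m) / (l * (l - m)).
    by field_ne0.
  by apply: divr_ge0 => //; apply: mulr_ge0; lra.
- by field_ne0.
- by field_ne0.
Qed.

End QuadraticCertificates.

Section Euclidean.
Variables (R : realType) (d : nat).
Local Notation vec := 'rV[R]_d.

Lemma sqn_ge0 (v : vec) : 0 <= sqn v.
Proof. by apply: sumr_ge0 => i _; rewrite -expr2 sqr_ge0. Qed.

Lemma sqnD (x w : vec) : sqn (x + w) = sqn x + 2 * dotv x w + sqn w.
Proof. by coordinatewise; ring. Qed.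

Lemma sqnZ (t : R) (w : vec) : sqn (t *: w) = t ^+ 2 * sqn w.
Proof. by coordinatewise; ring. Qed.

Lemma sqnN (w : vec) : sqn (- w) = sqn w.
Proof. by coordinatewise; ring. Qed.

Lemma dotvDr (g x w : vec) : dotv g (x + w) = dotv g x + dotv g w.
Proof. by coordinatewise; ring. Qed.

Lemma dotvZr (t : R) (g w : vec) : dotv g (t *: w) = t * dotv g w.
Proof. by coordinatewise; ring. Qed.

Lemma dotvNr (g w : vec) : dotv g (- w) = - dotv g w.
Proof. by coordinatewise; ring. Qed.

Lemma convexf_segment (h : vec -> R) (x y : vec) (t : R) :
  convexf h -> 0 <= t -> t <= 1 -> h (x + t *: (y - x)) <= h x + t * (h y - h x).
Proof.
move=> hconv t0 t1; have := hconv y x t t0 t1.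
have -> : t *: y + (1 - t) *: x = x + t *: (y - x) by apply/rowP => i; rewrite !mxE; ring.
lra.
Qed.

Lemma subdiff_lb (m : R) (f : vec -> R) (x g y : vec) :
  subdiff m f x g -> f x + dotv g (y - x) + m / 2 * sqn (y - x) <= f y.
Proof.
move=> /(_ y) hs.
have e : dotv (g - m *: x) (y - x) + m / 2 * sqn y - m / 2 * sqn x
   = dotv g (y - x) + m / 2 * sqn (y - x) by coordinatewise; field.
lra.
Qed.

Lemma subdiff_of_argmin (m : R) (L : \bar R) (f : vec -> R) (z g : vec) :
  inFclass m L f -> 0 <= m ->
  (forall w, f z - dotv g z <= f w - dotv g w) -> subdiff m f z g.
Proof.
case=> _ hconv _ m0 zmin y.
set A := (f y - m / 2 * sqn y) - (f z - m / 2 * sqn z) - dotv (g - m *: z) (y - z).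
suff : 0 <= A by rewrite /A; lra.
apply: (@ge0_of_small_defect _ A (m / 2 * sqn (y - z))) => [|t t0 t1].
  by apply: mulr_ge0; [lra | exact: sqn_ge0].
have hseg := convexf_segment z y hconv (ltW t0) t1.
have hmin := zmin (z + t *: (y - z)).
move: hseg hmin; rewrite /= sqnD sqnZ dotvDr !dotvZr => hseg hmin.
have ey : sqn y = sqn z + 2 * dotv z (y - z) + sqn (y - z).
  by rewrite -sqnD addrC subrK.
have eA : dotv (g - m *: z) (y - z) = dotv g (y - z) - m * dotv z (y - z).
  by coordinatewise; ring.
have : 0 <= t * (A + t * (m / 2 * sqn (y - z))).
  by rewrite ey in hseg; rewrite /A eA ey; nra.
by rewrite pmulr_rge0 //; lra.
Qed.


Lemma Fclass_quadratic_growth (m l : R) (f : vec -> R) (x g w : vec) :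
  inFclass m l%:E f -> subdiff m f x g ->
  f (x + w) - f x - dotv g w - m / 2 * sqn w <= (l - m) * sqn w.
Proof.
move=> [_ _ /(_ l erefl) hconc] hg.
have hmid := hconc (x + w) (x - w) (1 / 2) ltac:(lra) ltac:(lra).
have mid : 1 / 2 *: (x + w) + (1 - 1 / 2) *: (x - w) = x.
  by apply/rowP => i; rewrite !mxE; field.
have hlb := subdiff_lb (x - w) hg.
rewrite addrKl sqnN dotvNr in hlb.
move: hmid; rewrite mid sqnD -[x - w]/(x + - w) sqnD sqnN dotvNr => hmid.
have := sqn_ge0 w; nra.
Qed.

Lemma Fclass_descent (m l : R) (f : vec -> R) (x g v : vec) :
  m < l -> inFclass m l%:E f -> subdiff m f x g ->
  f (x + v) <= f x + dotv g v + l / 2 * sqn v.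
Proof.
move=> ml hf hg; have [_ _ /(_ l erefl) hconc] := hf.
set A := f x + dotv g v + l / 2 * sqn v - f (x + v).
suff : 0 <= A by rewrite /A; lra.
apply: (@ge0_of_small_defect _ A ((l - m) / 2 * sqn v)) => [|t t0 t1].
  by apply: mulr_ge0; [lra | exact: sqn_ge0].
have hseg := convexf_segment x (x + v) hconc (ltW t0) t1.
have hgrow := Fclass_quadratic_growth (t *: v) hf hg.
rewrite addrKl in hseg.
move: hseg hgrow; rewrite /= !sqnD sqnZ !dotvZr => hseg hgrow.
have : 0 <= t * (A + t * ((l - m) / 2 * sqn v)) by rewrite /A; lra.
by rewrite pmulr_rge0 //; lra.
Qed.

Lemma Fclass_interp (m : R) (L : \bar R) (f : vec -> R) (x gx y gy : vec) :
  (m%:E < L)%E -> inFclass m L f -> subdiff m f x gx -> subdiff m f y gy ->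
  f x + dotv gx (y - x) + m / 2 * sqn (y - x)
    + invE (L - m%:E)%E / 2 * sqn (gy - gx - m *: (y - x)) <= f y.
Proof.
case: L => [l| |] //= ml hf hx hy; last by rewrite mul0r mul0r addr0; exact: subdiff_lb.
rewrite lte_fin in ml.
set w := gy - gx - m *: (y - x).
set v := - (l - m)^-1 *: w.
have hup := Fclass_descent v ml hf hy.
have hlow := subdiff_lb (y + v) hx.
have lm : l - m != 0 by rewrite subr_eq0 gt_eqF.
have e : dotv gx (y + v - x) + m / 2 * sqn (y + v - x) - dotv gy v - l / 2 * sqn v
   = dotv gx (y - x) + m / 2 * sqn (y - x) + (l - m)^-1 / 2 * sqn w.
  by rewrite /v /w; coordinatewise; field.
lra.
Qed.

Lemma subgrad_diff_le_suboptimality (m1 m2 : R) (L1 : \bar R) (f1 f2 : vec -> R) (x g1 g2 : vec) (Flo : R) :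
  (m1%:E < L1)%E -> (m2%:E < L1)%E -> inFclass m1 L1 f1 ->
  subdiff m1 f1 x g1 -> subdiff m2 f2 x g2 -> (forall y, Flo <= f1 y - f2 y) ->
  invE (L1 - m2%:E)%E / 2 * sqn (g1 - g2) <= (f1 x - f2 x) - Flo.
Proof.
case: L1 => [l| |] //= ml1 ml2 hf h1 h2 hlo; last by rewrite !mul0r; have := hlo x; lra.
rewrite !lte_fin in ml1 ml2.
set v := - (l - m2)^-1 *: (g1 - g2).
have hup := Fclass_descent v ml1 hf h1.
have hlow := subdiff_lb (x + v) h2.
rewrite addrKl in hlow.
have lm : l - m2 != 0 by rewrite subr_eq0 gt_eqF.
have e : dotv g1 v + l / 2 * sqn v - dotv g2 v - m2 / 2 * sqn v
   = - ((l - m2)^-1 / 2 * sqn (g1 - g2)) by rewrite /v; coordinatewise; field.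
have := hlo (x + v); lra.
Qed.

Definition interp_quadv (m al a : R) (t u : vec) : R :=
  (1 + 2 * a) * (m / 2 * sqn t + al / 2 * sqn (u - m *: t)) - a * dotv u t.

Lemma interp_quadv_sum (m al a : R) (t u : vec) :
  interp_quadv m al a t u = \sum_(i < d) interp_quad m al a (t ord0 i) (u ord0 i).
Proof. by rewrite /interp_quadv /interp_quad; coordinatewise; ring. Qed.

Lemma interp_quadvNN (m al a : R) (t u : vec) :
  interp_quadv m al a (- t) (- u) = interp_quadv m al a t u.
Proof. by rewrite /interp_quadv; coordinatewise; ring. Qed.

Lemma interp_quadv_lb (m1 m2 al1 al2 a b s sp e : R) (t u v : vec) :
  half_bound m1 al1 a s e -> half_bound m2 al2 b sp (- e) ->
  s / 2 * sqn u + sp / 2 * sqn v <= interp_quadv m1 al1 a t u + interp_quadv m2 al2 b t v.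
Proof.
move=> h1 h2; rewrite !interp_quadv_sum /sqn /dotv !mulr_sumr -!big_split /=.
apply: ler_sum => i _; rewrite -!expr2.
have := h1 (t ord0 i) (u ord0 i); have := h2 (t ord0 i) (v ord0 i).
lra.
Qed.

Lemma Fclass_interp_pair (m a : R) (L : \bar R) (f : vec -> R) (x gx y gy : vec) :
  0 <= a -> (m%:E < L)%E -> inFclass m L f -> subdiff m f x gx -> subdiff m f y gy ->
  dotv gy (x - y) + interp_quadv m (invE (L - m%:E)%E) a (x - y) (gx - gy) <= f x - f y.
Proof.
move=> a0 mL hf hx hy.
have Ixy := ler_wpM2l a0 (Fclass_interp mL hf hx hy).
have Iyx := ler_wpM2l (ler_wpDr a0 ler01) (Fclass_interp mL hf hy hx).
set al := invE _ in Ixy Iyx *.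
have e : a * (dotv gx (y - x) + m / 2 * sqn (y - x) + al / 2 * sqn (gy - gx - m *: (y - x)))
    + (a + 1) * (dotv gy (x - y) + m / 2 * sqn (x - y) + al / 2 * sqn (gx - gy - m *: (x - y)))
    = dotv gy (x - y) + interp_quadv m al a (x - y) (gx - gy).
  by rewrite /interp_quadv; coordinatewise; ring.
lra.
Qed.

Lemma dca_step_descent (m1 m2 a b s sp e : R) (L1 L2 : \bar R) (f1 f2 : vec -> R)
    (x xp g1 g2 h : vec) :
  (m1%:E < L1)%E -> (m2%:E < L2)%E -> inFclass m1 L1 f1 -> inFclass m2 L2 f2 ->
  subdiff m1 f1 x g1 -> subdiff m1 f1 xp g2 -> subdiff m2 f2 x g2 -> subdiff m2 f2 xp h ->
  0 <= a -> 0 <= b ->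
  half_bound m1 (invE (L1 - m1%:E)%E) a s e ->
  half_bound m2 (invE (L2 - m2%:E)%E) b sp (- e) ->
  s / 2 * sqn (g1 - g2) + sp / 2 * sqn (g2 - h) <= (f1 x - f2 x) - (f1 xp - f2 xp).
Proof.
move=> mL1 mL2 hf1 hf2 h1x h1xp h2x h2xp a0 b0 c1 c2.
have I1 := Fclass_interp_pair a0 mL1 hf1 h1x h1xp.
have I2 := Fclass_interp_pair b0 mL2 hf2 h2xp h2x.
rewrite -[xp - x]opprB -[h - g2]opprB interp_quadvNN dotvNr in I2.
have := interp_quadv_lb (x - xp) (g1 - g2) (g2 - h) c1 c2.
lra.
Qed.

End Euclidean.

Section Telescoping.
Variable R : realType.

Lemma min_upto_le (N : nat) (h : nat -> R) (k : nat) :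
  (k <= N)%N -> min_upto N h <= h k.
Proof. by move=> kN; exact: (bigmin_le _ (Ordinal (kN : (k < N.+1)%N)) (fun i => h i)). Qed.

Variables (N : nat) (F a : nat -> R) (s sp : R).
Hypotheses (s0 : 0 <= s) (sp0 : 0 <= sp) (p0 : 0 < s + sp) (N0 : (0 < N)%N).
Hypothesis descent :
  forall k, (k < N)%N -> s / 2 * a k + sp / 2 * a k.+1 <= F k - F k.+1.

Lemma telescoped_min_bound : (s + sp) * N%:R * (min_upto N a / 2) <= F 0%N - F N.
Proof.
have -> : F 0%N - F N = \sum_(k < N) (F k - F k.+1).
  rewrite -(big_mkord xpredT (fun k => F k - F k.+1)).
  rewrite (eq_bigr (fun k => - F k.+1 - - F k)) => [|k _].
    by rewrite telescope_sumr // opprK addrC.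
  by rewrite opprK addrC.
have -> : (s + sp) * N%:R * (min_upto N a / 2)
    = \sum_(k < N) ((s + sp) * (min_upto N a / 2)).
  by rewrite sumr_const card_ord mulrAC mulr_natr.
apply: ler_sum => k _.
have := ler_wpM2l s0 (min_upto_le a (ltnW (ltn_ord k))).
have := ler_wpM2l sp0 (min_upto_le a (ltn_ord k)).
have := descent (ltn_ord k); lra.
Qed.

Lemma min_upto_rate : min_upto N a / 2 <= (F 0%N - F N) / ((s + sp) * N%:R).
Proof.
by rewrite ler_pdivlMr ?mulr_gt0 ?ltr0n // mulrC telescoped_min_bound.
Qed.

Lemma min_upto_rate_tail (gam Flo : R) :
  0 <= gam -> gam / 2 * a N <= F N - Flo ->
  min_upto N a / 2 <= (F 0%N - Flo) / ((s + sp) * N%:R + gam).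
Proof.
move=> gam0 tail; have pN : 0 < (s + sp) * N%:R by rewrite mulr_gt0 ?ltr0n.
rewrite ler_pdivlMr ?ltr_wpDr // mulrDl.
have := telescoped_min_bound; have := ler_wpM2l gam0 (min_upto_le a (leqnn N)).
lra.
Qed.

End Telescoping.

Section RegimeCertificates.
Variable R : realFieldType.

Lemma regime1_certified (m1 m2 l1 l2 : R) :
  0 <= m1 -> m1 <= l2 -> 0 < l2 -> l2 <= l1 -> m1 < l1 -> m2 < l2 ->
  0 <= m2 \/ [/\ m2 < 0, 0 < m1
             & (l2 + m2) / (l1 * l2) * ((l2 - l1) / - m2) + m1^-1 - l1^-1 <= 0] ->
  certified_rate m1 m2 (l1 - m1)^-1 (l2 - m2)^-1
    (l2^-1 * (l2 - m1) / (l1 - m1) + l2^-1 * (1 + m1 * (l1 - l2) / (l2 * (l1 - m1)))).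
Proof.
move=> m10 m1l2 l20 l21 ml1 ml2 hE.
have l1n : l1 != 0 by rewrite gt_eqF //; lra.
have l2n : l2 != 0 by rewrite gt_eqF.
have lm1 : l1 - m1 != 0 by rewrite subr_eq0 gt_eqF.
set c := m1 * (l1 - l2) / (l2 * (l1 - m1)).
have c0 : 0 <= c by apply: divr_ge0; nra.
have hc : 0 <= c * (l2 + m2) + m2.
  case: hE => [m20|[m20 m1p hE]]; first by nra.
  have m2n : m2 != 0 by rewrite lt_eqF.
  have m1n : m1 != 0 by rewrite gt_eqF.
  have -> : c * (l2 + m2) + m2 = ((l2 + m2) / (l1 * l2) * ((l2 - l1) / - m2) + m1^-1 - l1^-1)
              * (l1 * m1 * m2) / (l1 - m1).
    by rewrite /c; field_ne0.
  have l1m1 : 0 < l1 * m1 by rewrite mulr_gt0 //; lra.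
  apply: divr_ge0; last by rewrite subr_ge0 ltW.
  by apply: mulr_le0 => //; rewrite pmulr_rle0 // ltW.
have s0 : 0 <= l2^-1 * (l2 - m1) / (l1 - m1).
  by apply: divr_ge0; [apply: mulr_ge0; rewrite ?invr_ge0; lra | lra].
have sp0 : 0 < l2^-1 * (1 + c) by rewrite mulr_gt0 ?invr_gt0 //; lra.
exists (l2^-1 * (l2 - m1) / (l1 - m1)), (l2^-1 * (1 + c)), 0, c, (- (c * l2)).
split => //; first lra; first by split; [|exact: ltW].
split; last by rewrite opprK; apply: half_bound_weighted.
have -> : c * l2 = m1 * (l1 - l2) / (l1 - m1) by rewrite /c; field_ne0.
exact: half_bound_weight0.
Qed.

Lemma regime1_certified_inf (m1 m2 l2 : R) :
  0 <= m1 -> 0 < l2 -> m2 < l2 ->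
  0 <= m2 \/ [/\ m2 < 0, 0 < m1 & (l2 + m2) / (l2 * m2) + m1^-1 <= 0] ->
  certified_rate m1 m2 0 (l2 - m2)^-1 (l2^-1 * (1 + m1 / l2)).
Proof.
move=> m10 l20 ml2 hE; have l2n : l2 != 0 by rewrite gt_eqF.
set c := m1 / l2; have c0 : 0 <= c by rewrite divr_ge0 // ltW.
have hc : 0 <= c * (l2 + m2) + m2.
  case: hE => [m20|[m20 m1p hE]]; first by nra.
  have m1n : m1 != 0 by rewrite gt_eqF.
  have m2n : m2 != 0 by rewrite lt_eqF.
  have -> : c * (l2 + m2) + m2 = ((l2 + m2) / (l2 * m2) + m1^-1) * (m1 * m2).
    by rewrite /c; field_ne0.
  by apply: mulr_le0 => //; nra.
have sp0 : 0 < l2^-1 * (1 + c) by rewrite mulr_gt0 ?invr_gt0 //; lra.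
exists 0, (l2^-1 * (1 + c)), 0, c, (- m1); rewrite add0r.
split => //; first by split; [|exact: ltW].
split; first exact: half_bound_rate0.
have -> : - - m1 = c * l2 by rewrite opprK /c divfK.
exact: half_bound_weighted.
Qed.

Lemma regime2_certified (m1 m2 l1 l2 : R) :
  0 <= m1 -> 0 <= m2 -> m2 <= l1 -> l1 <= l2 -> m1 < l1 -> m2 < l2 ->
  certified_rate m1 m2 (l1 - m1)^-1 (l2 - m2)^-1
    (l1^-1 * (1 + m2 * (l2 - l1) / (l1 * (l2 - m2))) + l1^-1 * (l1 - m2) / (l2 - m2)).
Proof.
move=> m10 m20 m2l1 l12 ml1 ml2.
have l10 : 0 < l1 by lra.
have l1n : l1 != 0 by rewrite gt_eqF.
have lm2 : l2 - m2 != 0 by rewrite subr_eq0 gt_eqF.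
set c := m2 * (l2 - l1) / (l1 * (l2 - m2)).
have c0 : 0 <= c by apply: divr_ge0; nra.
have s0 : 0 < l1^-1 * (1 + c) by rewrite mulr_gt0 ?invr_gt0 //; lra.
have sp0 : 0 <= l1^-1 * (l1 - m2) / (l2 - m2).
  by apply: divr_ge0; [apply: mulr_ge0; rewrite ?invr_ge0; lra | lra].
exists (l1^-1 * (1 + c)), (l1^-1 * (l1 - m2) / (l2 - m2)), c, 0, (c * l1).
split => //; first lra; first by split; [exact: ltW|].
split; first by apply: half_bound_weighted => //; nra.
have -> : c * l1 = m2 * (l2 - l1) / (l2 - m2) by rewrite /c; field_ne0.
exact: half_bound_weight0.
Qed.

Lemma regime2_certified_inf (m1 m2 l1 : R) :
  0 <= m1 -> 0 <= m2 -> m1 < l1 ->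
  certified_rate m1 m2 (l1 - m1)^-1 0 (l1^-1 * (1 + m2 / l1)).
Proof.
move=> m10 m20 ml1; have l10 : 0 < l1 by lra.
have l1n : l1 != 0 by rewrite gt_eqF.
set c := m2 / l1; have c0 : 0 <= c by rewrite divr_ge0 // ltW.
have s0 : 0 < l1^-1 * (1 + c) by rewrite mulr_gt0 ?invr_gt0 //; lra.
exists (l1^-1 * (1 + c)), 0, c, 0, (c * l1); rewrite addr0.
split => //; first by split; [exact: ltW|].
split; first by apply: half_bound_weighted => //; nra.
by rewrite /c divfK //; exact: half_bound_rate0.
Qed.

Lemma regime4_certified (m1 m2 al1 l2 : R) :
  0 <= al1 -> m2 < 0 -> 0 < m1 + m2 -> m2 < l2 ->
  (0 < l2 /\ 0 < m1^-1 + m2^-1 + l2^-1) \/ l2 <= 0 ->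
  certified_rate m1 m2 al1 (l2 - m2)^-1 ((m1 + m2) / m2 ^+ 2).
Proof.
move=> al10 m20 m12 ml2 hB.
have m1p : 0 < m1 by lra.
have m1n : m1 != 0 by rewrite gt_eqF.
have m2n : m2 != 0 by rewrite lt_eqF.
have m12n : m1 + m2 != 0 by rewrite gt_eqF.
(* The f2-part is certified as if L2 were l >= l2, which only lowers al2. *)
set l := - (m1 * m2) / (m1 + m2); set c := - (m1 + m2) / m2.
have l0 : 0 < l by apply: divr_gt0 => //; nra.
have ml : m2 < l by lra.
have ll2 : l2 <= l.
  rewrite ler_pdivlMr //; case: hB => [[l20 hB]|]; last by nra.
  have l2n : l2 != 0 by rewrite gt_eqF.
  have -> : l2 * (m1 + m2) = (m1^-1 + m2^-1 + l2^-1) * (m1 * m2 * l2) - m1 * m2.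
    by field_ne0.
  suff : (m1^-1 + m2^-1 + l2^-1) * (m1 * m2 * l2) <= 0 by lra.
  have : m1 * m2 < 0 by nra.
  by rewrite pmulr_rle0 //; nra.
have c0 : 0 <= c by apply: mulr_le0; rewrite ?invr_le0; lra.
have sp0 : 0 < (m1 + m2) / m2 ^+ 2 by rewrite divr_gt0 // exprn_even_gt0.
exists 0, ((m1 + m2) / m2 ^+ 2), 0, c, (- m1); rewrite add0r.
split => //; first by split; [|exact: ltW].
split; first exact: half_bound_rate0.
apply: (half_bound_le (al := (l - m2)^-1)) => //.
  by rewrite lef_pV2 ?posrE ?subr_gt0 // lerB.
have -> : - - m1 = c * l by rewrite /c /l; field_ne0.
rewrite (_ : (m1 + m2) / m2 ^+ 2 = l^-1 * (1 + c)); last by rewrite /c /l; field_ne0.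
apply: half_bound_weighted => //.
by rewrite (_ : c * (l + m2) + m2 = 0) // /c /l; field_ne0.
Qed.

Lemma regime5_certified (m1 m2 al1 l2 : R) :
  0 <= al1 -> 0 < l2 -> l2 <= m1 -> m2 < l2 ->
  0 <= m2 \/ m2 < 0 /\ m1^-1 + m2^-1 + l2^-1 <= 0 ->
  certified_rate m1 m2 al1 (l2 - m2)^-1 ((l2 + m1) / l2 ^+ 2).
Proof.
move=> al10 l20 l2m1 ml2 hB.
have l2n : l2 != 0 by rewrite gt_eqF.
set c := m1 / l2; have c0 : 0 <= c by rewrite divr_ge0; lra.
have hc : 0 <= c * (l2 + m2) + m2.
  case: hB => [m20|[m20 hB]]; first by nra.
  have m1n : m1 != 0 by rewrite gt_eqF //; lra.
  have m2n : m2 != 0 by rewrite lt_eqF.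
  have -> : c * (l2 + m2) + m2 = (m1^-1 + m2^-1 + l2^-1) * (m1 * m2).
    by rewrite /c; field_ne0.
  by apply: mulr_le0 => //; nra.
have sp0 : 0 < (l2 + m1) / l2 ^+ 2 by rewrite divr_gt0 ?exprn_gt0 //; lra.
exists 0, ((l2 + m1) / l2 ^+ 2), 0, c, (- m1); rewrite add0r.
split => //; first by split; [|exact: ltW].
split; first exact: half_bound_rate0.
have -> : - - m1 = c * l2 by rewrite opprK /c divfK.
rewrite (_ : (l2 + m1) / l2 ^+ 2 = l2^-1 * (1 + c)); last by rewrite /c; field.
exact: half_bound_weighted.
Qed.

Lemma regime6_certified (m1 m2 l1 al2 : R) :
  0 <= m1 -> m1 < l1 -> l1 <= m2 -> 0 <= al2 ->
  certified_rate m1 m2 (l1 - m1)^-1 al2 ((l1 + m2) / l1 ^+ 2).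
Proof.
move=> m10 ml1 l1m2 al20; have l10 : 0 < l1 by lra.
have l1n : l1 != 0 by rewrite gt_eqF.
set c := m2 / l1; have c0 : 0 <= c by rewrite divr_ge0; lra.
have s0 : 0 < (l1 + m2) / l1 ^+ 2 by rewrite divr_gt0 ?exprn_gt0 //; lra.
exists ((l1 + m2) / l1 ^+ 2), 0, c, 0, m2; rewrite addr0.
split => //; first by split; [exact: ltW|].
split; last exact: half_bound_rate0.
rewrite (_ : (l1 + m2) / l1 ^+ 2 = l1^-1 * (1 + c)); last by rewrite /c; field.
have -> : m2 = c * l1 by rewrite /c divfK.
by apply: half_bound_weighted => //; nra.
Qed.

Lemma regime3_rate_pos (i1 j B : R) :
  0 <= i1 -> 0 <= j -> B <= 0 -> 0 < j \/ B < 0 /\ 0 < i1 ->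
  0 <= i1 * B / (B - i1) /\ 0 < i1 * B / (B - i1) + j.
Proof.
move=> i10 j0 B0 hpos.
have s0 : 0 <= i1 * B / (B - i1).
  by apply: mulr_le0; [exact: mulr_ge0_le0 | rewrite invr_le0; lra].
split=> //; case: hpos => [|[Bn i1p]]; first lra.
suff : 0 < i1 * B / (B - i1) by lra.
by rewrite -mulrA mulr_gt0 // nmulr_rgt0 // invr_lt0; lra.
Qed.

End RegimeCertificates.

Section Regimes.
Variable R : realType.

Lemma weight_ratioE (m i1 i2 : R) :
  1 - m * i1 != 0 ->
  (if m == 0 then 0 else (i2 - i1) / (m^-1 - i1)) = m * (i2 - i1) / (1 - m * i1).
Proof.
move=> h; have [->|m0] := eqVneq m 0; first by rewrite !mul0r.
by field_ne0.
Qed.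

Lemma invE_subr_ge0 (m : R) (L : \bar R) : (m%:E < L)%E -> 0 <= invE (L - m%:E)%E.
Proof. by case: L => [l| |] //=; rewrite lte_fin => ml; rewrite invr_ge0 subr_ge0 ltW. Qed.

Lemma regime3_f1_bound (m1 B : R) (L1 : \bar R) :
  0 < m1 -> B <= 0 -> (m1%:E < L1)%E ->
  half_bound m1 (invE (L1 - m1%:E)%E) 0 (invE L1 * B / (B - invE L1)) (m1 / (m1 * B - 1)).
Proof.
move=> m1p B0; have m1n : m1 != 0 by rewrite gt_eqF.
have m1B : m1 * B - 1 < 0 by nra.
have m1Bn : m1 * B - 1 != 0 by rewrite lt_eqF.
case: L1 => [l1| |] //=; rewrite ?lte_fin => ml1; last first.
  rewrite !mul0r; apply: (half_bound_le (e := - m1)) => //; last exact: half_bound_rate0.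
  rewrite -subr_ge0 opprK (_ : _ + m1 = m1 ^+ 2 * B / (m1 * B - 1)); last by field_ne0.
  apply: mulr_le0; first exact: mulr_ge0_le0 (sqr_ge0 _) B0.
  by rewrite invr_le0 ltW.
have l1n : l1 != 0 by rewrite gt_eqF //; lra.
have lm1 : l1 - m1 != 0 by rewrite subr_eq0 gt_eqF.
have l1B : l1 * B - 1 < 0 by nra.
have l1Bn : l1 * B - 1 != 0 by rewrite lt_eqF.
have Bl1 : B - l1^-1 != 0.
  by rewrite (_ : B - l1^-1 = (l1 * B - 1) / l1) ?mulf_neq0 ?invr_eq0 //; field.
(* chosen so that the budget of [half_bound_weight0] is m1 / (m1 B - 1) *)
set l' := m1 * (l1 * B - 1) / (m1 * B - 1).
have l'0 : 0 < l' by rewrite /l' -mulrA mulr_gt0 // nmulr_rgt0 // invr_lt0.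
have l'n : l' != 0 by rewrite gt_eqF.
rewrite (_ : l1^-1 * B / (B - l1^-1) = l'^-1 * (l' - m1) / (l1 - m1)); last first.
  by rewrite /l'; field_ne0.
rewrite (_ : m1 / (m1 * B - 1) = - (m1 * (l1 - l') / (l1 - m1))); last first.
  by rewrite /l'; field_ne0.
by apply: half_bound_weight0 => //; exact: ltW.
Qed.

Lemma regime3_f2_bound (m1 m2 : R) (L2 : \bar R) :
  m2 < 0 -> 0 < m1 + m2 -> (m1%:E < L2)%E ->
  exists2 b, 0 <= b & half_bound m2 (invE (L2 - m2%:E)%E) b (invE (L2 + m2%:E)%E)
                        (- (m1 / (m1 * Bval m1 m2 L2 - 1))).
Proof.
move=> m20 m12; have m2n : m2 != 0 by rewrite lt_eqF.
have m1n : m1 != 0 by rewrite gt_eqF //; lra.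
rewrite /Bval; case: L2 => [l2| |] //=; rewrite ?lte_fin => ml2; last first.
  exists 0 => //; rewrite addr0 (_ : m1 / (m1 * (m1^-1 + m2^-1) - 1) = m2).
    exact: half_bound_rate0.
  by field_ne0; rewrite (_ : _ + _ = m1 / m2) ?mulf_neq0 ?invr_eq0 //; field.
have l2n : l2 != 0 by rewrite gt_eqF //; lra.
have l2m2 : l2 + m2 != 0 by rewrite gt_eqF //; lra.
set b := - m2 / (l2 + m2).
exists b; first by rewrite divr_ge0 ?oppr_ge0 ?ltW //; lra.
rewrite (_ : (l2 + m2)^-1 = l2^-1 * (1 + b)); last by rewrite /b; field_ne0.
rewrite (_ : - (m1 / (m1 * (m1^-1 + m2^-1 + l2^-1) - 1)) = b * l2); last first.
  rewrite /b; field_ne0.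
  by rewrite (_ : _ + _ = m1 * (l2 + m2)) ?mulf_neq0 //; ring.
apply: half_bound_weighted; [lra | lra |].
by rewrite /b divfK // addNr.
Qed.

Lemma regime1_rate (m1 m2 : R) (L1 L2 : \bar R) :
  (m1%:E < L1)%E -> (m2%:E < L2)%E -> (L1 < +oo)%E \/ (L2 < +oo)%E ->
  0 < m1 + m2 \/ (m1 = 0 /\ m2 = 0) -> D_reg 1 m1 m2 L1 L2 ->
  certified_rate m1 m2 (invE (L1 - m1%:E)%E) (invE (L2 - m2%:E)%E) (p_reg 1 m1 m2 L1 L2).
Proof.
move=> mL1 mL2 hfin hpos [L21 m1L2 m10 m2L1 hE].
case: L2 mL2 L21 m1L2 hfin hE => [l2| |] //=; last by case: L1 mL1 m2L1 => [l1| |] //= _ _ _ _ _ [].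
rewrite !lte_fin lee_fin => ml2 L21 m1l2 _ hE.
have l20 : 0 < l2 by case: hpos => [|[]]; lra.
have m1p : m2 < 0 -> 0 < m1 by case: hpos => [|[]]; lra.
have hE' (e : R) : 0 <= m2 \/ m2 < 0 /\ e <= 0 -> 0 <= m2 \/ [/\ m2 < 0, 0 < m1 & e <= 0].
  by case=> [|[m20 he]]; [left | right; split => //; exact: m1p].
case: L1 mL1 m2L1 L21 hE => [l1| |] //=; rewrite ?lte_fin ?lee_fin => ml1 _ l21 hE.
  have l1n : l1 != 0 by rewrite gt_eqF //; lra.
  have l2n : l2 != 0 by rewrite gt_eqF.
  have lm1 : l1 - m1 != 0 by rewrite subr_eq0 gt_eqF.
  rewrite /sig1p /= weight_ratioE; last first.
    by rewrite (_ : 1 - m1 * l1^-1 = (l1 - m1) / l1) ?mulf_neq0 ?invr_eq0 //; field.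
  rewrite (_ : m1 * (l2^-1 - l1^-1) / (1 - m1 * l1^-1) = m1 * (l1 - l2) / (l2 * (l1 - m1)));
    last by field_ne0.
  by apply: regime1_certified => //; exact: hE'.
rewrite /sig1p /= weight_ratioE ?mulr0 ?subr0 ?oner_neq0 // add0r divr1.
by apply: regime1_certified_inf => //; exact: hE'.
Qed.

Lemma regime2_rate (m1 m2 : R) (L1 L2 : \bar R) :
  (m1%:E < L1)%E -> (m2%:E < L2)%E -> (L1 < +oo)%E \/ (L2 < +oo)%E ->
  D_reg 2 m1 m2 L1 L2 ->
  certified_rate m1 m2 (invE (L1 - m1%:E)%E) (invE (L2 - m2%:E)%E) (p_reg 2 m1 m2 L1 L2).
Proof.
move=> mL1 mL2 hfin [L12 m2L1 m20 m1L2 m10].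
case: L1 mL1 L12 m2L1 hfin => [l1| |] //=; last by case: L2 mL2 m1L2 => [l2| |] //= _ _ _ _ _ [].
rewrite !lte_fin lee_fin => ml1 L12 m2l1 _.
have l1n : l1 != 0 by rewrite gt_eqF //; lra.
case: L2 mL2 m1L2 L12 => [l2| |] //=; rewrite ?lte_fin ?lee_fin => ml2 _ l12.
  have lm2 : l2 - m2 != 0 by rewrite subr_eq0 gt_eqF.
  have l2n : l2 != 0 by rewrite gt_eqF //; lra.
  rewrite /sig2 /= weight_ratioE; last first.
    by rewrite (_ : 1 - m2 * l2^-1 = (l2 - m2) / l2) ?mulf_neq0 ?invr_eq0 //; field.
  rewrite (_ : m2 * (l1^-1 - l2^-1) / (1 - m2 * l2^-1) = m2 * (l2 - l1) / (l1 * (l2 - m2)));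
    last by field_ne0.
  exact: regime2_certified.
rewrite /sig2 /= weight_ratioE ?mulr0 ?subr0 ?oner_neq0 // addr0 divr1.
exact: regime2_certified_inf.
Qed.

Lemma regime4_rate (m1 m2 : R) (L1 L2 : \bar R) :
  (m1%:E < L1)%E -> (m2%:E < L2)%E -> 0 < m1 + m2 \/ (m1 = 0 /\ m2 = 0) ->
  D_reg 4 m1 m2 L1 L2 ->
  certified_rate m1 m2 (invE (L1 - m1%:E)%E) (invE (L2 - m2%:E)%E) (p_reg 4 m1 m2 L1 L2).
Proof.
move=> mL1 mL2 hpos [m20 m1p _ hB]; rewrite /= /sig4 /sig4p add0r.
have m12 : 0 < m1 + m2 by case: hpos => // [[]]; lra.
case: L2 mL2 hB => [l2| |] //=; rewrite ?lte_fin ?lee_fin => ml2 hB.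
  apply: regime4_certified => //; first exact: invE_subr_ge0.
  by case: hB => [[B0 m1l2]|[B0 l20 _]|[_ l20]]; [left; split => //; lra | left | right].
have m1n : m1 != 0 by rewrite gt_eqF.
have m2n : m2 != 0 by rewrite lt_eqF.
have B0 : Bval m1 m2 +oo < 0.
  rewrite /Bval /= addr0 (_ : _ + _ = (m1 + m2) / (m1 * m2)); last by field_ne0.
  by rewrite pmulr_rlt0 // invr_lt0; nra.
by case: hB => [[B _]|[B _ _]|[_ //]]; have := lt_trans B B0; rewrite ltxx.
Qed.

Lemma regime5_rate (m1 m2 : R) (L1 L2 : \bar R) :
  (m2%:E < L2)%E -> D_reg 5 m1 m2 L1 L2 ->
  certified_rate m1 m2 (invE (L1 - m1%:E)%E) (invE (L2 - m2%:E)%E) (p_reg 5 m1 m2 L1 L2).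
Proof.
move=> mL2 [mL1 L2m1 L20 _ hB]; rewrite /= /sig5 /sig5p add0r.
case: L2 mL2 L2m1 L20 hB => [l2| |] //=; rewrite !lte_fin lee_fin => ml2 l2m1 l20 hB.
by apply: regime5_certified => //; exact: invE_subr_ge0.
Qed.

Lemma regime6_rate (m1 m2 : R) (L1 L2 : \bar R) :
  D_reg 6 m1 m2 L1 L2 ->
  certified_rate m1 m2 (invE (L1 - m1%:E)%E) (invE (L2 - m2%:E)%E) (p_reg 6 m1 m2 L1 L2).
Proof.
move=> [mL2 L1m2 mL1 m10]; rewrite /= /sig6 /sig6p addr0.
case: L1 L1m2 mL1 => [l1| |] //=; rewrite lte_fin lee_fin => l1m2 ml1.
by apply: regime6_certified => //; exact: invE_subr_ge0.
Qed.

Lemma regime3_rate (m1 m2 : R) (L1 L2 : \bar R) :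
  (m1%:E < L1)%E -> (m2%:E < L2)%E -> (L1 < +oo)%E \/ (L2 < +oo)%E ->
  0 < m1 + m2 \/ (m1 = 0 /\ m2 = 0) -> D_reg 3 m1 m2 L1 L2 ->
  certified_rate m1 m2 (invE (L1 - m1%:E)%E) (invE (L2 - m2%:E)%E) (p_reg 3 m1 m2 L1 L2).
Proof.
move=> mL1 mL2 hfin hpos [[m20 m1p] m1L2 _ hB _]; rewrite /= /sig3 /sig3p.
have m12 : 0 < m1 + m2 by case: hpos => // [[]]; lra.
have [b b0 h2] := regime3_f2_bound m20 m12 m1L2.
have h1 := regime3_f1_bound m1p hB mL1.
have i10 : 0 <= invE L1.
  by case: L1 mL1 {h1 hfin} => [l1| |] //=; rewrite lte_fin => ml1; rewrite invr_ge0; lra.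
have [j0 hj] : 0 <= invE (L2 + m2%:E)%E /\
    (0 < invE (L2 + m2%:E)%E \/ Bval m1 m2 L2 < 0 /\ 0 < invE L1).
  case: L2 m1L2 {mL2 h1 h2 hB} hfin => [l2| |] //=; rewrite ?lte_fin => ml2 hfin.
    have lp : 0 < (l2 + m2)^-1 by rewrite invr_gt0; lra.
    by split; [exact: ltW | left].
  split=> //; right; split.
    have m1n : m1 != 0 by rewrite gt_eqF.
    have m2n : m2 != 0 by rewrite lt_eqF.
    rewrite /Bval /= addr0 (_ : _ + _ = (m1 + m2) / (m1 * m2)); last by field_ne0.
    by rewrite pmulr_rlt0 // invr_lt0; nra.
  case: L1 mL1 hfin {i10} => [l1| |] //=; rewrite ?lte_fin => ml1; last by case.
  by rewrite invr_gt0; lra.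
have [s0 p0] := regime3_rate_pos i10 j0 hB hj.
by exists (invE L1 * Bval m1 m2 L2 / (Bval m1 m2 L2 - invE L1)), (invE (L2 + m2%:E)%E),
  0, b, (m1 / (m1 * Bval m1 m2 L2 - 1)).
Qed.

Lemma regime_rate (m1 m2 : R) (L1 L2 : \bar R) (i : nat) :
  (m1%:E < L1)%E -> (m2%:E < L2)%E -> (L1 < +oo)%E \/ (L2 < +oo)%E ->
  0 < m1 + m2 \/ (m1 = 0 /\ m2 = 0) -> D_reg i m1 m2 L1 L2 ->
  certified_rate m1 m2 (invE (L1 - m1%:E)%E) (invE (L2 - m2%:E)%E) (p_reg i m1 m2 L1 L2).
Proof.
move=> mL1 mL2 hfin hpos; case: i => [|[|[|[|[|[|[|i]]]]]]] hD; try by case: hD.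
- exact: regime1_rate.
- exact: regime2_rate.
- exact: regime3_rate.
- exact: regime4_rate.
- exact: regime5_rate.
- exact: regime6_rate.
Qed.

End Regimes.

Unset Implicit Arguments.

Theorem corollary1 (R : realType) (d : nat)
    (f1 f2 : 'rV[R]_d -> R) (m1 m2 : R) (L1 L2 : \bar R)
    (Flo : R) (N : nat) (x g1 g2 : nat -> 'rV[R]_d) (i : nat) :
  0 <= m1 -> (m1%:E < L1)%E -> (m2%:E < L2)%E ->
  inFclass m1 L1 f1 -> inFclass m2 L2 f2 ->
  (* Flo = inf (f1 - f2), F bounded below *)
  (forall y, Flo <= f1 y - f2 y) ->
  (forall m, (forall y, m <= f1 y - f2 y) -> m <= Flo) ->
  (* dom subdiff f1 nonempty and contained in dom subdiff f2 *)
  (exists y g, subdiff m1 f1 y g) ->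
  (forall y, (exists g, subdiff m1 f1 y g) -> exists g, subdiff m2 f2 y g) ->
  (* range subdiff f2 contained in range subdiff f1 *)
  (forall g, (exists y, subdiff m2 f2 y g) -> exists y, subdiff m1 f1 y g) ->
  (L1 < +oo)%E \/ (L2 < +oo)%E ->
  0 < m1 + m2 \/ (m1 = 0 /\ m2 = 0) ->
  (1 <= N)%N ->
  (* DCA iterations *)
  subdiff m1 f1 (x 0%N) (g1 0%N) ->
  (forall k, (k < N)%N ->
     [/\ subdiff m2 f2 (x k) (g2 k),
         (forall w, f1 (x k.+1) - dotv (g2 k) (x k.+1) <= f1 w - dotv (g2 k) w)
       & g1 k.+1 = g2 k]) ->
  subdiff m2 f2 (x N) (g2 N) ->
  (* regime *)
  D_reg i m1 m2 L1 L2 ->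
  let mn := min_upto N (fun k => sqn (g1 k - g2 k)) in
  mn / 2 <= ((f1 (x 0%N) - f2 (x 0%N)) - (f1 (x N) - f2 (x N)))
              / (p_reg i m1 m2 L1 L2 * N%:R)
  /\ ((m2%:E < L1)%E ->
      mn / 2 <= ((f1 (x 0%N) - f2 (x 0%N)) - Flo)
                 / (p_reg i m1 m2 L1 L2 * N%:R + invE (L1 - m2%:E)%E)).
Proof.
move=> m10 mL1 mL2 hf1 hf2 hlo _ _ _ _ hfin hpos N1 h10 hit h2N hD mn.
have [s [sp [a [b [e [-> p0 [s0 sp0] [a0 b0] [c1 c2]]]]]]] :=
  regime_rate mL1 mL2 hfin hpos hD.
have h1 k : (k <= N)%N -> subdiff m1 f1 (x k) (g1 k).
  case: k => [//|k] kN; have [_ hmin ->] := hit k kN.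
  exact: subdiff_of_argmin hf1 m10 hmin.
have h2 k : (k <= N)%N -> subdiff m2 f2 (x k) (g2 k).
  by rewrite leq_eqVlt => /orP[/eqP -> //|kN]; have [] := hit k kN.
have descent k : (k < N)%N ->
    s / 2 * sqn (g1 k - g2 k) + sp / 2 * sqn (g1 k.+1 - g2 k.+1)
      <= (f1 (x k) - f2 (x k)) - (f1 (x k.+1) - f2 (x k.+1)).
  move=> kN; have [_ _ g1E] := hit k kN; rewrite g1E.
  apply: (dca_step_descent mL1 mL2 hf1 hf2 _ _ _ _ a0 b0 c1 c2).
  - exact: h1 (ltnW kN).
  - by rewrite -g1E; exact: h1.
  - exact: h2 (ltnW kN).
  - exact: h2.
split; first exact: (min_upto_rate s0 sp0 p0 N1 descent).
move=> m2L1; apply: (min_upto_rate_tail s0 sp0 p0 N1 descent (invE_subr_ge0 m2L1)).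
exact: subgrad_diff_le_suboptimality mL1 m2L1 hf1 (h1 N (leqnn N)) h2N hlo.
Qed.
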